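(* Let $h>0$, $n\in\mathbb{N}$, and let $\lambda:\mathbb{T}\to\mathbb{R}$ be an $n$-cycle with values $\lambda_0,\dots,\lambda_{n-1}\in\mathbb{R}\setminus\{\pm\tfrac1h\}$, such that $0<|e_{\lambda}(nh)|\neq1$ and $0<|e_{-\lambda}(nh)|\neq1$. Define for $t\in\mathbb{T}$ $$p(t)=-\lambda(t+2h),\quad q(t)=-2\Delta_h\lambda(t+h)+\Delta_h\lambda(t+2h)-\lambda(t+2h)\lambda(t+3h),$$ $$r(t)=-\Delta_h^2\lambda(t)-\lambda(t)\Delta_h\lambda(t+2h)+\lambda(t)\lambda(t+2h)\lambda(t+3h).$$ Then the third-order equation $$\Delta_h^3y(t)+p(t)\Delta_h^2y(t)+q(t)\Delta_h y(t)+r(t)y(t)=0,\qquad t\in\mathbb{T},$$ has Hyers–Ulam stability on $\mathbb{T}$ with Hyers–Ulam stability constant $K=\bigl(K_0(\lambda)\bigr)^2K_0(-\lambda)$.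
   Context: Fix $h>0$ and let $\mathbb{T}=\{0,h,2h,3h,\dots\}$. For $x:\mathbb{T}\to\mathbb{R}$, $\Delta_h x(t)=\frac{x(t+h)-x(t)}{h}$ and $\Delta_h^2x=\Delta_h(\Delta_h x)$, $\Delta_h^3x=\Delta_h(\Delta_h^2 x)$. An $n$-cycle is a function $\mu:\mathbb{T}\to\mathbb{R}$ with $\mu(t)=\mu_k$ whenever $t/h\equiv k\pmod n$, $k\in\{0,\dots,n-1\}$, which has period $n$ and no smaller period. For such $\mu$ define the discrete exponential $e_\mu(t)=\prod_{k=0}^{t/h-1}(1+h\mu(kh))$ (empty product $=1$), so $e_\mu(nh)=\prod_{k=0}^{n-1}(1+h\mu_k)$. For $k\in\{0,\dots,n-1\}$ define $$S_k(\mu)=\sum_{j=1}^{n}\prod_{i=0}^{j-1}\frac{1}{|1+h\mu_{(k+i)\bmod n}|},$$ (e.g. $S_0(\mu)=\frac{1}{|1+h\mu_0|}+\frac{1}{|1+h\mu_0||1+h\mu_1|}+\dots+\frac{1}{|1+h\mu_0|\cdots|1+h\mu_{n-1}|}$), and, when $0<|e_\mu(nh)|\neq1$, $$K_0(\mu)=\frac{h|e_\mu(nh)|}{\bigl|1-|e_\mu(nh)|\bigr|}\max\{S_0(\mu),\dots,S_{n-1}(\mu)\}.$$ Here $-\lambda$ denotes the $n$-cycle with values $-\lambda_0,\dots,-\lambda_{n-1}$. Hyers–Ulam stability: an equation $\mathcal{L}[y](t)=f(t)$, $t\in\mathbb{T}$ (with $\mathcal{L}$ a linear difference operator) has Hyers–Ulam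 stability on $\mathbb{T}$ with Hyers–Ulam stability constant $K>0$ if for every $\varepsilon>0$ and every $\xi:\mathbb{T}\to\mathbb{R}$ with $|\mathcal{L}[\xi](t)-f(t)|\le\varepsilon$ for all $t\in\mathbb{T}$, there is a solution $y:\mathbb{T}\to\mathbb{R}$ of the equation with $|\xi(t)-y(t)|\le K\varepsilon$ for all $t\in\mathbb{T}$. The minimum Hyers–Ulam stability constant is the smallest such $K$. *)

(* concrete reals R. A function x : T -> R on T = {0,h,2h,...}
   is represented by x : nat -> R with x k standing for x(k h). *)
From Stdlib Require Import Reals Lra Lia List.
Open Scope R_scope.

Definition dh (h : R) (x : nat -> R) (k : nat) : R := (x (S k) - x k) / h.

Definition is_cycle (n : nat) (mu : nat -> R) : Prop :=
  (0 < n)%nat /\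
  (forall k, mu (k + n)%nat = mu k) /\
  (forall m, (0 < m < n)%nat -> exists k, mu (k + m)%nat <> mu k).

Fixpoint dexp (h : R) (mu : nat -> R) (k : nat) : R :=
  match k with
  | O => 1
  | S k' => dexp h mu k' * (1 + h * mu k')
  end.

Fixpoint invprod (h : R) (n : nat) (mu : nat -> R) (k j : nat) : R :=
  match j with
  | O => 1
  | S j' => invprod h n mu k j' * (1 / Rabs (1 + h * mu ((k + j') mod n)%nat))
  end.

Definition Sk (h : R) (n : nat) (mu : nat -> R) (k : nat) : R :=
  fold_right (fun j acc => invprod h n mu k j + acc) 0 (seq 1 n).

Definition K0 (h : R) (n : nat) (mu : nat -> R) : R :=
  h * Rabs (dexp h mu n) / Rabs (1 - Rabs (dexp h mu n)) *
  fold_right Rmax 0 (map (Sk h n mu) (seq 0 n)).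

Definition negc (mu : nat -> R) : nat -> R := fun k => - mu k.

Definition HU_stable (L : (nat -> R) -> nat -> R) (K : R) : Prop :=
  0 < K /\
  forall eps : R, 0 < eps ->
  forall xi : nat -> R, (forall t, Rabs (L xi t) <= eps) ->
  exists y : nat -> R, (forall t, L y t = 0) /\
    (forall t, Rabs (xi t - y t) <= K * eps).

Definition pc (lam : nat -> R) (k : nat) : R := - lam (k + 2)%nat.
Definition qc (h : R) (lam : nat -> R) (k : nat) : R :=
  - 2 * dh h lam (k + 1)%nat + dh h lam (k + 2)%nat
  - lam (k + 2)%nat * lam (k + 3)%nat.
Definition rc (h : R) (lam : nat -> R) (k : nat) : R :=
  - dh h (dh h lam) k - lam k * dh h lam (k + 2)%nat
  + lam k * lam (k + 2)%nat * lam (k + 3)%nat.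

Definition L3 (h : R) (lam : nat -> R) (y : nat -> R) (k : nat) : R :=
  dh h (dh h (dh h y)) k + pc lam k * dh h (dh h y) k
  + qc h lam k * dh h y k + rc h lam k * y k.

From Stdlib Require Import Reals Lra Lia List Arith Wf_nat FunctionalExtensionality.
Open Scope R_scope.

(* The operator factors as L3 = (Delta - lam(.+3)) (Delta + lam(.+2)) (Delta - lam),
   so it suffices to show that each first-order operator Delta - nu(.+s), nu an
   n-periodic coefficient with 1 + h nu <> 0 and |e_nu(nh)| <> 1, has the
   inhomogeneous Hyers-Ulam property with constant K_0(nu), and that this
   property composes with multiplying constants.

   For a first-order operator, the difference z between an approximate and an
   exact solution satisfies z (k+1) = a k z k + e k with a = 1 + h nu(.+s)
   periodic and |e| <= h eps.  Writing E for the modulus of the product of a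
   over one period and M for the largest one-period sum S_k, we show that a
   bounded solution with |z| <= E / |1 - E| * M * |e|_oo exists: for E < 1 the
   forward solution from 0, for E > 1 the backward (convergent series)
   solution. *)

Fixpoint absprod (a : nat -> R) (k m : nat) : R :=
  match m with
  | O => 1
  | S m' => absprod a k m' * Rabs (a (k + m')%nat)
  end.

(* sum_{j=1}^{m} 1 / absprod a k j : the damping seen by a backward sum *)
Fixpoint invsum (a : nat -> R) (k m : nat) : R :=
  match m with
  | O => 0
  | S m' => invsum a k m' + / absprod a k (S m')
  end.

(* sum_{j<m} prod_{j<i<m} |a (k+i)| : the amplification seen by a forward sum *)
Fixpoint fwdsum (a : nat -> R) (k m : nat) : R :=
  match m with
  | O => 0
  | S m' => Rabs (a (k + m')%nat) * fwdsum a k m' + 1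
  end.

Section Products.
Variable a : nat -> R.
Hypothesis a_nz : forall k, a k <> 0.

Lemma absprod_pos k m : 0 < absprod a k m.
Proof.
  induction m as [|m IH]; simpl; [lra|].
  apply Rmult_lt_0_compat; [exact IH | apply Rabs_pos_lt, a_nz].
Qed.

Lemma absprod_app k m1 m2 :
  absprod a k (m1 + m2) = absprod a k m1 * absprod a (k + m1) m2.
Proof.
  induction m2 as [|m2 IH]; simpl; [rewrite Nat.add_0_r; ring|].
  rewrite Nat.add_succ_r; simpl; rewrite IH.
  replace (k + (m1 + m2))%nat with (k + m1 + m2)%nat by lia; ring.
Qed.

Lemma invsum_nonneg k m : 0 <= invsum a k m.
Proof.
  induction m as [|m IH]; simpl; [lra|].
  pose proof (Rinv_0_lt_compat _ (absprod_pos k (S m))); simpl in *; lra.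
Qed.

Lemma invsum_mono k m1 m2 : (m1 <= m2)%nat -> invsum a k m1 <= invsum a k m2.
Proof.
  induction 1 as [|m2 _ IH]; [lra|]; simpl.
  pose proof (Rinv_0_lt_compat _ (absprod_pos k (S m2))); simpl in *; lra.
Qed.

Lemma invsum_app k m1 m2 :
  invsum a k (m1 + m2) = invsum a k m1 + invsum a (k + m1) m2 / absprod a k m1.
Proof.
  induction m2 as [|m2 IH]; simpl; [rewrite Nat.add_0_r; unfold Rdiv; ring|].
  rewrite Nat.add_succ_r; simpl; rewrite IH, absprod_app.
  replace (k + (m1 + m2))%nat with (k + m1 + m2)%nat by lia.
  pose proof (absprod_pos k m1); pose proof (absprod_pos (k + m1) m2).
  pose proof (Rabs_pos_lt _ (a_nz (k + m1 + m2)%nat)).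
  field; repeat split; lra.
Qed.

Lemma fwdsum_nonneg k m : 0 <= fwdsum a k m.
Proof.
  induction m as [|m IH]; simpl; [lra|].
  pose proof (Rabs_pos (a (k + m)%nat)); nra.
Qed.

Lemma fwdsum_app k m1 m2 :
  fwdsum a k (m1 + m2) = absprod a (k + m1) m2 * fwdsum a k m1 + fwdsum a (k + m1) m2.
Proof.
  induction m2 as [|m2 IH]; simpl; [rewrite Nat.add_0_r; ring|].
  rewrite Nat.add_succ_r; simpl; rewrite IH.
  replace (k + (m1 + m2))%nat with (k + m1 + m2)%nat by lia; ring.
Qed.

Lemma fwdsum_eq k m : fwdsum a k m = absprod a k m * invsum a k m.
Proof.
  induction m as [|m IH]; simpl; [ring|].
  rewrite IH.
  pose proof (absprod_pos k m); pose proof (Rabs_pos_lt _ (a_nz (k + m)%nat)).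
  field; lra.
Qed.

End Products.

Section Periodic.
Variable a : nat -> R.
Hypothesis a_nz : forall k, a k <> 0.
Variable n : nat.
Hypothesis n_pos : (0 < n)%nat.
Hypothesis a_per : forall k, a (k + n)%nat = a k.
Variable M : R.
Hypothesis invsum_period_le : forall k, invsum a k n <= M.

Let E := absprod a 0 n.

Lemma fwdsum_per k m : fwdsum a (k + n) m = fwdsum a k m.
Proof.
  induction m as [|m IH]; simpl; [reflexivity|].
  rewrite IH; replace (k + n + m)%nat with (k + m + n)%nat by lia.
  rewrite a_per; reflexivity.
Qed.

Lemma absprod_period k : absprod a k n = E.
Proof.
  induction k as [|k IH]; [reflexivity|]. rewrite <- IH.
  pose proof (absprod_app a k 1 n) as H1; pose proof (absprod_app a k n 1) as H2.
  rewrite Nat.add_comm in H2; rewrite H2 in H1; simpl in H1.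
  rewrite !Nat.add_0_r, a_per in H1; replace (k + 1)%nat with (S k) in H1 by lia.
  pose proof (Rabs_pos_lt _ (a_nz k)).
  apply (Rmult_eq_reg_r (Rabs (a k))); lra.
Qed.

Lemma period_bound_nonneg : 0 <= M.
Proof. pose proof (invsum_nonneg a a_nz 0 n); pose proof (invsum_period_le 0); lra. Qed.

(* Peeling off one period: invsum a k N <= M + invsum a k (N - n) / E. *)
Lemma invsum_bounded : 1 < E -> forall N k, invsum a k N <= M * E / (E - 1).
Proof.
  intros HE. set (B := M * E / (E - 1)).
  pose proof period_bound_nonneg.
  assert (HMB : M <= B).
  { unfold B. apply (Rmult_le_reg_r (E - 1)); [lra|].
    unfold Rdiv; rewrite Rmult_assoc, Rinv_l by lra; nra. }
  assert (Hfix : M + B / E = B) by (unfold B; field; lra).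
  intro N; induction N as [N IH] using lt_wf_ind; intro k.
  destruct (le_lt_dec N n) as [HN | HN].
  - pose proof (invsum_mono a a_nz k N n HN); pose proof (invsum_period_le k); lra.
  - replace N with (n + (N - n))%nat by lia.
    rewrite invsum_app, absprod_period by assumption.
    assert (Htail : invsum a (k + n) (N - n) <= B) by (apply IH; lia).
    assert (invsum a (k + n) (N - n) / E <= B / E)
      by (apply Rmult_le_compat_r; [apply Rlt_le, Rinv_0_lt_compat; lra | exact Htail]).
    pose proof (invsum_period_le k); lra.
Qed.

(* Peeling off one period: fwdsum a s m <= E * fwdsum a s (m - n) + E * M. *)
Lemma fwdsum_bounded : E < 1 -> forall m s, fwdsum a s m <= E * M / (1 - E).
Proof.
  intros HE. pose proof (absprod_pos a a_nz 0 n) as HE0; fold E in HE0.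
  set (B := E * M / (1 - E)).
  pose proof period_bound_nonneg.
  assert (Hwin : forall s, fwdsum a s n <= E * M).
  { intro s. rewrite fwdsum_eq, absprod_period by assumption.
    apply Rmult_le_compat_l; [lra | apply invsum_period_le]. }
  assert (HMB : E * M <= B).
  { apply (Rmult_le_reg_r (1 - E)); [lra|].
    replace (B * (1 - E)) with (E * M) by (unfold B; field; lra); nra. }
  assert (Hfix : E * B + E * M = B) by (unfold B; field; lra).
  intro m; induction m as [m IH] using lt_wf_ind; intro s.
  destruct (le_lt_dec m n) as [Hm | Hm].
  - (* a short window is the end of a full period window *)
    pose proof (fwdsum_app a (s + m) (n - m) m) as Hc.
    replace (n - m + m)%nat with n in Hc by lia.
    replace (s + m + (n - m))%nat with (s + n)%nat in Hc by lia.
    rewrite fwdsum_per in Hc.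
    pose proof (absprod_pos a a_nz (s + n) m).
    pose proof (fwdsum_nonneg a (s + m) (n - m)).
    pose proof (Hwin (s + m)%nat); nra.
  - replace m with ((m - n) + n)%nat by lia.
    rewrite fwdsum_app, absprod_period by assumption.
    assert (fwdsum a s (m - n) <= B) by (apply IH; lia).
    pose proof (Hwin (s + (m - n))%nat); nra.
Qed.

End Periodic.

Fixpoint prodseq (a : nat -> R) (m : nat) : R :=
  match m with
  | O => 1
  | S m' => prodseq a m' * a m'
  end.

Fixpoint affine_iter (a e : nat -> R) (c : R) (k : nat) : R :=
  match k with
  | O => c
  | S k' => a k' * affine_iter a e c k' + e k'
  end.

Fixpoint psum (u : nat -> R) (N : nat) : R :=
  match N with
  | O => 0
  | S N' => psum u N' + u N'
  end.

Lemma psum_diff_abs (u : nat -> R) (N1 N2 : nat) : (N1 <= N2)%nat ->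
  Rabs (psum u N2 - psum u N1)
  <= psum (fun j => Rabs (u j)) N2 - psum (fun j => Rabs (u j)) N1.
Proof.
  induction 1 as [|N2 _ IH]; [rewrite !Rminus_diag, Rabs_R0; lra|]; simpl.
  replace (psum u N2 + u N2 - psum u N1) with ((psum u N2 - psum u N1) + u N2) by ring.
  pose proof (Rabs_triang (psum u N2 - psum u N1) (u N2)); lra.
Qed.

Lemma abs_summable_cv (u : nat -> R) :
  {l | Un_cv (psum (fun j => Rabs (u j))) l} -> {l | Un_cv (psum u) l}.
Proof.
  intro Habs. apply R_complete. intros eps Heps.
  destruct (CV_Cauchy _ Habs eps Heps) as [N HN]. exists N.
  intros p q Hp Hq. specialize (HN p q Hp Hq). unfold Rdist in *.
  destruct (le_lt_dec p q) as [Hpq | Hqp].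
  - pose proof (psum_diff_abs u p q Hpq); rewrite Rabs_minus_sym.
    rewrite Rabs_minus_sym in HN; pose proof (Rle_abs (psum (fun j => Rabs (u j)) q
      - psum (fun j => Rabs (u j)) p)); lra.
  - pose proof (psum_diff_abs u q p (Nat.lt_le_incl _ _ Hqp)).
    pose proof (Rle_abs (psum (fun j => Rabs (u j)) p - psum (fun j => Rabs (u j)) q)); lra.
Qed.

Lemma limit_dist_le (U : nat -> R) (l x D : R) (k : nat) :
  Un_cv U l -> (forall N, (N >= k)%nat -> Rabs (U N - x) <= D) -> Rabs (l - x) <= D.
Proof.
  intros Hcv HU. destruct (Rle_lt_dec (Rabs (l - x)) D) as [|Hlt]; [assumption|].
  exfalso. destruct (Hcv (Rabs (l - x) - D)) as [N HN]; [lra|].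
  specialize (HN (max N k) ltac:(lia)); specialize (HU (max N k) ltac:(lia)).
  unfold Rdist in HN; rewrite Rabs_minus_sym in HN.
  pose proof (Rabs_triang (l - U (max N k)) (U (max N k) - x)) as Htri.
  replace (l - U (max N k) + (U (max N k) - x)) with (l - x) in Htri by ring; lra.
Qed.

(* Bounded solutions of z (k+1) = a k z k + e k for periodic a and bounded e:
   if E < 1 the solution started at 0 stays bounded (forward sums); if E > 1
   the unique bounded solution is z k = - prodseq a k * sum_{j>=k} e j / prodseq a (j+1)
   (backward sums). *)
Section AffineRecurrence.
Variable a : nat -> R.
Hypothesis a_nz : forall k, a k <> 0.
Variable n : nat.
Hypothesis n_pos : (0 < n)%nat.
Hypothesis a_per : forall k, a (k + n)%nat = a k.
Variable M : R.
Hypothesis invsum_period_le : forall k, invsum a k n <= M.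
Variable e : nat -> R.
Variable eps : R.
Hypothesis e_le : forall k, Rabs (e k) <= eps.

Let E := absprod a 0 n.

Lemma prodseq_abs m : Rabs (prodseq a m) = absprod a 0 m.
Proof. induction m as [|m IH]; simpl; [apply Rabs_R1 | rewrite Rabs_mult, IH; reflexivity]. Qed.

Lemma prodseq_abs_pos m : 0 < Rabs (prodseq a m).
Proof. rewrite prodseq_abs; apply absprod_pos, a_nz. Qed.

Let u := fun j => e j / prodseq a (S j).

(* variation of constants *)
Lemma affine_iter_closed c k : affine_iter a e c k = prodseq a k * (c + psum u k).
Proof.
  induction k as [|k IH]; simpl; [ring|]. rewrite IH. unfold u; simpl.
  pose proof (prodseq_abs_pos k) as Hp; pose proof (a_nz k).
  assert (prodseq a k <> 0) by (intro Hz; rewrite Hz, Rabs_R0 in Hp; lra).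
  field; auto.
Qed.

Lemma eps_nonneg : 0 <= eps.
Proof. pose proof (e_le 0); pose proof (Rabs_pos (e 0)); lra. Qed.

Lemma affine_iter_contracting : E < 1 -> forall k,
  Rabs (affine_iter a e 0 k) <= E / Rabs (1 - E) * M * eps.
Proof.
  intros HE k. pose proof eps_nonneg.
  assert (Hfwd : Rabs (affine_iter a e 0 k) <= eps * fwdsum a 0 k).
  { induction k as [|k IH]; simpl; [rewrite Rabs_R0; lra|].
    pose proof (Rabs_triang (a k * affine_iter a e 0 k) (e k)).
    rewrite Rabs_mult in *. pose proof (e_le k); pose proof (Rabs_pos (a k)).
    assert (Rabs (a k) * Rabs (affine_iter a e 0 k) <= Rabs (a k) * (eps * fwdsum a 0 k))
      by (apply Rmult_le_compat_l; lra).
    nra. }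
  pose proof (fwdsum_bounded a a_nz n n_pos a_per M invsum_period_le HE k 0) as Hb.
  fold E in Hb. assert (0 < E) by apply absprod_pos, a_nz.
  rewrite (Rabs_right (1 - E)) by lra.
  apply Rle_trans with (eps * (E * M / (1 - E))).
  - apply Rle_trans with (eps * fwdsum a 0 k); [assumption | apply Rmult_le_compat_l; lra].
  - right; field; lra.
Qed.

Section Expanding.
Hypothesis HE : 1 < E.

Let B := M * E / (E - 1).

(* |prodseq a k| * sum_{k<=j<k+N} |u j| <= eps * invsum a k N <= eps * B *)
Lemma backward_tail_le k N :
  Rabs (prodseq a k) * (psum (fun j => Rabs (u j)) (k + N) - psum (fun j => Rabs (u j)) k)
  <= eps * B.
Proof.
  apply Rle_trans with (eps * invsum a k N).
  2: { apply Rmult_le_compat_l; [apply eps_nonneg|].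
       apply (invsum_bounded a a_nz n n_pos a_per M invsum_period_le HE). }
  induction N as [|N IH]; simpl; [rewrite Nat.add_0_r, Rminus_diag; lra|].
  rewrite Nat.add_succ_r; simpl.
  assert (Hterm : Rabs (prodseq a k) * Rabs (u (k + N)%nat) <= eps * / absprod a k (S N)).
  { unfold u, Rdiv. rewrite Rabs_mult, Rabs_inv, !prodseq_abs.
    change (absprod a 0 (S (k + N))) with (absprod a 0 (k + N) * Rabs (a (0 + (k + N))%nat)).
    rewrite absprod_app; simpl; simpl Nat.add.
    pose proof (absprod_pos a a_nz 0 k); pose proof (absprod_pos a a_nz k N).
    pose proof (Rabs_pos_lt _ (a_nz (k + N)%nat)); pose proof (e_le (k + N)%nat).
    replace (absprod a 0 k * (Rabs (e (k + N)%nat)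
               * / (absprod a 0 k * absprod a k N * Rabs (a (k + N)%nat))))
      with (Rabs (e (k + N)%nat) * / (absprod a k N * Rabs (a (k + N)%nat))) by (field; lra).
    apply Rmult_le_compat_r; [apply Rlt_le, Rinv_0_lt_compat; nra | assumption]. }
  change (absprod a k N * Rabs (a (k + N)%nat)) with (absprod a k (S N)).
  assert (Hsplit : forall p x y z, p * (x + y - z) = p * (x - z) + p * y) by (intros; ring).
  rewrite Hsplit, Rmult_plus_distr_l; lra.
Qed.

Lemma psum_cv : {l | Un_cv (psum u) l}.
Proof.
  apply abs_summable_cv, growing_cv.
  - intro N; simpl; pose proof (Rabs_pos (u N)); lra.
  - exists (eps * B). intros x [N ->].
    pose proof (backward_tail_le 0 N) as Ht; simpl in Ht; rewrite Rabs_R1 in Ht; lra.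
Qed.

Lemma affine_iter_expanding : exists c, forall k,
  Rabs (affine_iter a e c k) <= E / Rabs (1 - E) * M * eps.
Proof.
  destruct psum_cv as [L HL]. exists (- L). intro k.
  rewrite affine_iter_closed, Rabs_mult.
  replace (- L + psum u k) with (- (L - psum u k)) by ring; rewrite Rabs_Ropp.
  pose proof (prodseq_abs_pos k) as Hp.
  assert (Hrest : Rabs (L - psum u k) <= eps * B / Rabs (prodseq a k)).
  { apply (limit_dist_le (psum u) L (psum u k) _ k HL). intros N HN.
    replace N with (k + (N - k))%nat by lia.
    pose proof (psum_diff_abs u k (k + (N - k)) ltac:(lia)).
    pose proof (backward_tail_le k (N - k)).
    apply (Rmult_le_reg_l (Rabs (prodseq a k))); [assumption|].
    replace (Rabs (prodseq a k) * (eps * B / Rabs (prodseq a k))) with (eps * B) by (field; lra).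
    nra. }
  apply Rle_trans with (eps * B).
  - apply (Rmult_le_compat_l (Rabs (prodseq a k))) in Hrest; [|lra].
    replace (Rabs (prodseq a k) * (eps * B / Rabs (prodseq a k))) with (eps * B) in Hrest
      by (field; lra); exact Hrest.
  - rewrite Rabs_left1 by lra. right; unfold B; field; lra.
Qed.

End Expanding.

Lemma affine_iter_bounded : E <> 1 -> exists c, forall k,
  Rabs (affine_iter a e c k) <= E / Rabs (1 - E) * M * eps.
Proof.
  intro HE1. destruct (Rlt_or_le E 1) as [Hlt | Hge].
  - exists 0; exact (affine_iter_contracting Hlt).
  - apply affine_iter_expanding; lra.
Qed.

End AffineRecurrence.

Lemma absprod_shift (a : nat -> R) (s k m : nat) :
  absprod (fun j => a (j + s)%nat) k m = absprod a (k + s) m.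
Proof. induction m as [|m IH]; simpl; [reflexivity|]. rewrite IH; do 3 f_equal; lia. Qed.

Lemma invsum_shift (a : nat -> R) (s k m : nat) :
  invsum (fun j => a (j + s)%nat) k m = invsum a (k + s) m.
Proof. induction m as [|m IH]; cbn [invsum]; [reflexivity|]. rewrite IH, absprod_shift; reflexivity. Qed.

Lemma fold_sum_acc (F : nat -> R) (acc : R) (l : list nat) :
  fold_right (fun j s => F j + s) acc l = fold_right (fun j s => F j + s) 0 l + acc.
Proof. induction l as [|x l IH]; simpl; [ring | rewrite IH; ring]. Qed.

Lemma fold_max_ge (x : R) (l : list R) : In x l -> x <= fold_right Rmax 0 l.
Proof.
  induction l as [|y l IH]; simpl; [contradiction|]. intros [-> | Hin].
  - apply Rmax_l.
  - eapply Rle_trans; [apply IH, Hin | apply Rmax_r].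
Qed.

Definition fo_op (h : R) (nu : nat -> R) (s : nat) (y : nat -> R) (k : nat) : R :=
  dh h y k - nu (k + s)%nat * y k.

Definition HU_inhom (L : (nat -> R) -> nat -> R) (K : R) : Prop :=
  forall (g x : nat -> R) (eps : R), (forall k, Rabs (L x k - g k) <= eps) ->
  exists y, (forall k, L y k = g k) /\ (forall k, Rabs (x k - y k) <= K * eps).

(* Solving A (B y) = g as A w = g, then B y = w: the constants multiply. *)
Lemma HU_inhom_comp (A B : (nat -> R) -> nat -> R) (KA KB : R) :
  HU_inhom A KA -> HU_inhom B KB -> HU_inhom (fun y => A (B y)) (KB * KA).
Proof.
  intros HA HB g x eps Hx.
  destruct (HA g (B x) eps Hx) as [w [Hw Hxw]].
  destruct (HB w x (KA * eps) Hxw) as [y [Hy Hxy]].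
  exists y; split.
  - intro k. replace (B y) with w by (apply functional_extensionality; intro; symmetry; apply Hy).
    apply Hw.
  - intro k. rewrite Rmult_assoc; apply Hxy.
Qed.

(* Delta_h y - nu(. + s) y = g has the inhomogeneous Hyers-Ulam
   property with constant K_0(nu); its error obeys the affine recurrence
   z (k+1) = (1 + h nu (k+s)) z k + h * residual k. *)
Section FirstOrder.
Variable h : R.
Hypothesis h_pos : 0 < h.
Variable n : nat.
Hypothesis n_pos : (0 < n)%nat.
Variable nu : nat -> R.
Hypothesis nu_per : forall k, nu (k + n)%nat = nu k.
Hypothesis nu_reg : forall k, 1 + h * nu k <> 0.

Let growth := fun k => 1 + h * nu k.

Lemma nu_mod m : nu (m mod n) = nu m.
Proof.
  assert (Hq : forall q r, nu (r + q * n)%nat = nu r).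
  { induction q as [|q IH]; intro r; simpl; [rewrite Nat.add_0_r; reflexivity|].
    replace (r + (n + q * n))%nat with (r + q * n + n)%nat by lia; rewrite nu_per; apply IH. }
  rewrite (Nat.div_mod_eq m n) at 2; rewrite Nat.add_comm, Nat.mul_comm; symmetry; apply Hq.
Qed.

Lemma growth_per k : growth (k + n)%nat = growth k.
Proof. unfold growth; rewrite nu_per; reflexivity. Qed.

Lemma absprod_dexp m : absprod growth 0 m = Rabs (dexp h nu m).
Proof. induction m as [|m IH]; simpl; [rewrite Rabs_R1 | rewrite IH, Rabs_mult]; reflexivity. Qed.

Lemma invprod_absprod k j : invprod h n nu (k mod n) j = / absprod growth k j.
Proof.
  induction j as [|j IH]; simpl; [rewrite Rinv_1; reflexivity|].
  rewrite IH, Rinv_mult; unfold growth.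
  rewrite Nat.Div0.add_mod_idemp_l, nu_mod; unfold Rdiv; ring.
Qed.

Lemma invsum_Sk k : invsum growth k n = Sk h n nu (k mod n).
Proof.
  unfold Sk.
  assert (Hm : forall m, invsum growth k m
    = fold_right (fun j acc => invprod h n nu (k mod n) j + acc) 0 (seq 1 m)).
  { induction m as [|m IH]; [reflexivity|].
    rewrite seq_S, fold_right_app; simpl fold_right at 2; rewrite fold_sum_acc.
    cbn [invsum]; rewrite IH, Rplus_0_r, <- (invprod_absprod k (S m)).
    replace (1 + m)%nat with (S m) by lia; reflexivity. }
  apply Hm.
Qed.

Let Smax := fold_right Rmax 0 (map (Sk h n nu) (seq 0 n)).

Lemma invsum_le_Smax k : invsum growth k n <= Smax.
Proof.
  rewrite invsum_Sk. apply fold_max_ge, in_map, in_seq.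
  pose proof (Nat.mod_upper_bound k n); lia.
Qed.

Lemma fo_op_HU (s : nat) : Rabs (dexp h nu n) <> 1 -> HU_inhom (fo_op h nu s) (K0 h n nu).
Proof.
  intros Hd g x eps Hx.
  set (a := fun k => growth (k + s)%nat).
  assert (a_nz : forall k, a k <> 0) by (intro; apply nu_reg).
  assert (a_per : forall k, a (k + n)%nat = a k).
  { intro k; unfold a; replace (k + n + s)%nat with (k + s + n)%nat by lia; apply growth_per. }
  assert (HE : absprod a 0 n = Rabs (dexp h nu n)).
  { unfold a; rewrite absprod_shift, (absprod_period growth nu_reg n n_pos growth_per).
    apply absprod_dexp. }
  assert (HM : forall k, invsum a k n <= Smax) by (intro; unfold a; rewrite invsum_shift; apply invsum_le_Smax).
  set (e := fun k => h * (fo_op h nu s x k - g k)).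
  assert (He : forall k, Rabs (e k) <= h * eps).
  { intro k; unfold e; rewrite Rabs_mult, (Rabs_right h) by lra.
    apply Rmult_le_compat_l; [lra | apply Hx]. }
  destruct (affine_iter_bounded a a_nz n n_pos a_per Smax HM e (h * eps) He) as [c Hc];
    [rewrite HE; exact Hd|].
  exists (fun k => x k - affine_iter a e c k); split.
  - intro k. unfold fo_op, dh; simpl affine_iter. unfold e, fo_op, dh, a, growth. field; lra.
  - intro k. replace (x k - (x k - affine_iter a e c k)) with (affine_iter a e c k) by ring.
    eapply Rle_trans; [apply Hc|]. rewrite HE. right; unfold K0; fold Smax; unfold Rdiv; ring.
Qed.

Lemma K0_pos : 0 < Rabs (dexp h nu n) -> Rabs (dexp h nu n) <> 1 -> 0 < K0 h n nu.
Proof.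
  intros Hd Hd1. unfold K0; fold Smax.
  assert (0 < Smax).
  { apply Rlt_le_trans with (invsum growth 0 n); [|apply invsum_le_Smax].
    apply Rlt_le_trans with (invsum growth 0 1).
    - cbn [invsum]; rewrite Rplus_0_l; apply Rinv_0_lt_compat, absprod_pos, nu_reg.
    - apply invsum_mono; [apply nu_reg | lia]. }
  assert (0 < Rabs (1 - Rabs (dexp h nu n))) by (apply Rabs_pos_lt; lra).
  apply Rmult_lt_0_compat; [|assumption].
  unfold Rdiv; apply Rmult_lt_0_compat; [nra | apply Rinv_0_lt_compat; assumption].
Qed.

End FirstOrder.

Lemma L3_factor (h : R) (lam y : nat -> R) (k : nat) : h <> 0 ->
  L3 h lam y k = fo_op h lam 3 (fo_op h (negc lam) 2 (fo_op h lam 0 y)) k.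
Proof.
  intro Hh. unfold L3, pc, qc, rc, fo_op, negc, dh.
  replace (k + 0)%nat with k by lia.
  replace (S k + 0)%nat with (S k) by lia.
  replace (S (S k) + 0)%nat with (S (S k)) by lia.
  replace (k + 1)%nat with (S k) by lia.
  replace (k + 2)%nat with (S (S k)) by lia.
  replace (S k + 2)%nat with (S (S (S k))) by lia.
  replace (k + 3)%nat with (S (S (S k))) by lia.
  replace (S k + 1)%nat with (S (S k)) by lia.
  replace (S k + 3)%nat with (S (S (S (S k)))) by lia.
  replace (S (S k) + 2)%nat with (S (S (S (S k)))) by lia.
  field; exact Hh.
Qed.

Lemma growth_ne0 (h x : R) : 0 < h -> x <> - (1 / h) -> 1 + h * x <> 0.
Proof.
  intros Hh Hx Heq. apply Hx. apply (Rmult_eq_reg_l h); [|lra].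
  replace (h * - (1 / h)) with (-1) by (field; lra); lra.
Qed.

Theorem theorem5p3 (h : R) (n : nat) (lam : nat -> R) :
  0 < h ->
  is_cycle n lam ->
  (forall k, lam k <> 1 / h /\ lam k <> - (1 / h)) ->
  0 < Rabs (dexp h lam n) -> Rabs (dexp h lam n) <> 1 ->
  0 < Rabs (dexp h (negc lam) n) -> Rabs (dexp h (negc lam) n) <> 1 ->
  HU_stable (L3 h lam) (K0 h n lam ^ 2 * K0 h n (negc lam)).
Proof.
  intros h_pos [n_pos [lam_per _]] lam_ne Hd_pos Hd_ne Hnd_pos Hnd_ne.
  assert (reg : forall k, 1 + h * lam k <> 0)
    by (intro k; apply growth_ne0, lam_ne; assumption).
  assert (nreg : forall k, 1 + h * negc lam k <> 0)
    by (intro k; apply growth_ne0; [assumption|]; unfold negc; intro Hk; apply (proj1 (lam_ne k)); lra).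
  assert (nper : forall k, negc lam (k + n)%nat = negc lam k)
    by (intro k; unfold negc; rewrite lam_per; reflexivity).
  assert (Hcomp : HU_inhom (fun y => fo_op h lam 3 (fo_op h (negc lam) 2 (fo_op h lam 0 y)))
                    ((K0 h n lam * K0 h n (negc lam)) * K0 h n lam)).
  { apply HU_inhom_comp; [apply (fo_op_HU h h_pos n n_pos lam lam_per reg 3 Hd_ne)|].
    apply HU_inhom_comp; [apply (fo_op_HU h h_pos n n_pos (negc lam) nper nreg 2 Hnd_ne)|].
    apply (fo_op_HU h h_pos n n_pos lam lam_per reg 0 Hd_ne). }
  pose proof (K0_pos h h_pos n n_pos lam lam_per reg Hd_pos Hd_ne).
  pose proof (K0_pos h h_pos n n_pos (negc lam) nper nreg Hnd_pos Hnd_ne).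
  split; [apply Rmult_lt_0_compat; [apply pow_lt|]; assumption|].
  intros eps _ xi Hxi.
  destruct (Hcomp (fun _ => 0) xi eps) as [y [Hy Hdist]].
  { intro k; rewrite Rminus_0_r, <- L3_factor by lra; apply Hxi. }
  exists y; split.
  - intro k; rewrite L3_factor by lra; apply Hy.
  - intro k; eapply Rle_trans; [apply Hdist | right; ring].
Qed.
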